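(* Let $I$ be an inverse semigroup [respectively, inverse monoid] generated, as a semigroup [respectively, monoid], by a finite set $\Sigma$. Then the idempotent problem of $I$ with respect to $\Sigma$ is a regular language if and only if $I$ is finite. *)

From mathcomp Require Import all_boot.
Set Implicit Arguments. Unset Strict Implicit. Unset Printing Implicit Defensive.

Definition is_inverse_semigroup (I : Type) (mul : I -> I -> I) : Prop :=
  (forall x y z, mul x (mul y z) = mul (mul x y) z) /\
  (forall x, exists y, mul (mul x y) x = x /\ mul (mul y x) y = y /\
     forall y', mul (mul x y') x = x -> mul (mul y' x) y' = y' -> y' = y).

Definition is_inverse_monoid (I : Type) (mul : I -> I -> I) (one : I) : Prop :=
  is_inverse_semigroup mul /\ (forall x, mul one x = x /\ mul x one = x).

Definition is_idempotent (I : Type) (mul : I -> I -> I) (x : I) : Prop :=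
  mul x x = x.

Definition eval_sg (I : Type) (mul : I -> I -> I) (S : Type) (gen : S -> I)
  (a : S) (w : seq S) : I :=
  foldl (fun acc b => mul acc (gen b)) (gen a) w.

Definition eval_mon (I : Type) (mul : I -> I -> I) (one : I) (S : Type)
  (gen : S -> I) (w : seq S) : I :=
  foldl (fun acc b => mul acc (gen b)) one w.

Definition generates_semigroup (I : Type) (mul : I -> I -> I) (S : Type)
  (gen : S -> I) : Prop :=
  forall x : I, exists (a : S) (w : seq S), eval_sg mul gen a w = x.

Definition generates_monoid (I : Type) (mul : I -> I -> I) (one : I) (S : Type)
  (gen : S -> I) : Prop :=
  forall x : I, exists w : seq S, eval_mon mul one gen w = x.

Definition idem_problem_sg (I : Type) (mul : I -> I -> I) (S : Type)
  (gen : S -> I) (w : seq S) : Prop :=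
  match w with
  | [::] => False
  | a :: w' => is_idempotent mul (eval_sg mul gen a w')
  end.

Definition idem_problem_mon (I : Type) (mul : I -> I -> I) (one : I) (S : Type)
  (gen : S -> I) (w : seq S) : Prop :=
  is_idempotent mul (eval_mon mul one gen w).

Definition regular (S : finType) (L : seq S -> Prop) : Prop :=
  exists (Q : finType) (q0 : Q) (delta : Q -> S -> Q) (F : pred Q),
    forall w : seq S, L w <-> F (foldl delta q0 w).

Fixpoint has_elem (I : Type) (x : I) (s : seq I) : Prop :=
  match s with [::] => False | y :: s' => y = x \/ has_elem x s' end.

Definition finite_carrier (I : Type) : Prop :=
  exists s : seq I, forall x : I, has_elem x s.

(* Finite implies regular: the automaton whose states are the elements of I
   computes the value of the input word (regular_of_finite).

   Regular implies finite.  Fix an automaton recognising the idempotent problem.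
   If two words induce the same transformation of its states, then z x and z y
   are simultaneously idempotent for all z, where x and y are their values; hence
   x and y are compatible, i.e. x^-1 y and y^-1 x are idempotent
   (compat_of_idem_contexts).  Call the transformation of a prefix its key, and
   the trace of a word w the set of pairs (key of a prefix of w, next letter).
   By induction on prefixes, using compat_dom_mul, the trace of w determines the
   domain idempotent of its value (dom_le_of_trace_sub), and compatible elements
   with equal domains are equal (compat_dom_eq).  So every element is determined
   by the key and the trace of a word representing it, which range over a finite
   set (finite_of_compatible_keys). *)

From mathcomp Require Import all_boot.
From Stdlib Require Import ClassicalEpsilon.
Set Implicit Arguments. Unset Strict Implicit. Unset Printing Implicit Defensive.

Section InverseSemigroup.
Variables (I : Type) (mul : I -> I -> I).
Hypothesis H : is_inverse_semigroup mul.
Local Notation "x ** y" := (mul x y) (at level 40, left associativity).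

Lemma mulA x y z : x ** (y ** z) = x ** y ** z.
Proof. exact: (proj1 H). Qed.

Definition inv x : I :=
  proj1_sig (constructive_indefinite_description _ ((proj2 H) x)).

Lemma invP x : x ** inv x ** x = x /\ inv x ** x ** inv x = inv x /\
  forall y, x ** y ** x = x -> y ** x ** y = y -> y = inv x.
Proof. by rewrite /inv; case: constructive_indefinite_description. Qed.

Lemma mul_inv_mul x : x ** inv x ** x = x.
Proof. by case: (invP x). Qed.

Lemma inv_mul_inv x : inv x ** x ** inv x = inv x.
Proof. by case: (invP x) => _ []. Qed.

Lemma mul_inv_mulr a x : a ** x ** inv x ** x = a ** x.
Proof. by rewrite -!mulA (mulA x) mul_inv_mul. Qed.

Lemma inv_mul_invr a x : a ** inv x ** x ** inv x = a ** inv x.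
Proof. by rewrite -!mulA (mulA (inv x)) inv_mul_inv. Qed.

Lemma inv_unique x y : x ** y ** x = x -> y ** x ** y = y -> y = inv x.
Proof. by case: (invP x) => _ [] _; apply. Qed.

Lemma invK x : inv (inv x) = x.
Proof. by symmetry; apply: inv_unique; [apply: inv_mul_inv | apply: mul_inv_mul]. Qed.

Definition idem e := e ** e = e.

Lemma inv_idem e : idem e -> inv e = e.
Proof. by move=> He; symmetry; apply: inv_unique; rewrite He. Qed.

Definition dom x := x ** inv x.

Lemma idem_dom x : idem (dom x).
Proof. by rewrite /idem /dom mulA mul_inv_mul. Qed.

Lemma idem_invmul x : idem (inv x ** x).
Proof. by rewrite /idem mulA inv_mul_inv. Qed.

Lemma mul_idemK a e : idem e -> a ** e ** e = a ** e.
Proof. by move=> He; rewrite -mulA He. Qed.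

(* Products of idempotents are idempotent: y := (e f)^-1 equals f y e, hence
   y is idempotent, and so is its inverse e f. *)
Lemma idem_mul e f : idem e -> idem f -> idem (e ** f).
Proof.
move=> He Hf; set x := e ** f; set y := inv x.
have fye : f ** y ** e = y.
  apply: inv_unique; rewrite /x !mulA !(mul_idemK _ Hf) !(mul_idemK _ He).
  - by have := mul_inv_mul (e ** f); rewrite !mulA.
  - have := inv_mul_inv (e ** f); rewrite -/y !mulA => yxy.
    by rewrite -[in RHS]yxy !mulA.
have idem_y : idem y.
  rewrite /idem; have -> : y ** y = f ** (y ** (e ** f) ** y) ** e.
    by rewrite -{1}fye -[X in _ ** X]fye !mulA.
  by rewrite inv_mul_inv fye.
by rewrite /idem -[x]invK -/y (inv_idem idem_y).
Qed.

(* Idempotents commute: f e is an inverse of the idempotent e f. *)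
Lemma idem_comm e f : idem e -> idem f -> e ** f = f ** e.
Proof.
move=> He Hf; have Hef := idem_mul He Hf; have Hfe := idem_mul Hf He.
rewrite -(inv_idem Hef); symmetry; apply: inv_unique;
  rewrite !mulA !(mul_idemK _ Hf) !(mul_idemK _ He).
- by have := Hef; rewrite /idem !mulA.
- by have := Hfe; rewrite /idem !mulA.
Qed.

Lemma idem_sandwich e c : idem e -> idem c -> e ** c = e ** c ** e.
Proof. by move=> He Hc; rewrite -mulA -(idem_comm He Hc) mulA He. Qed.

Lemma inv_mul x y : inv (x ** y) = inv y ** inv x.
Proof.
have comm_mid : dom y ** (inv x ** x) = inv x ** x ** dom y.
  exact: idem_comm (idem_dom y) (idem_invmul x).
symmetry; apply: inv_unique.
- have -> : x ** y ** (inv y ** inv x) ** (x ** y) =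
            x ** (dom y ** (inv x ** x)) ** y by rewrite /dom !mulA.
  by rewrite comm_mid /dom !mulA (mul_inv_mul x) mul_inv_mulr.
- have -> : inv y ** inv x ** (x ** y) ** (inv y ** inv x) =
            inv y ** (inv x ** x ** dom y) ** inv x by rewrite /dom !mulA.
  by rewrite -comm_mid /dom !mulA (inv_mul_inv y) inv_mul_invr.
Qed.

Definition le e f := e ** f = e.

Lemma le_trans e f g : le e f -> le f g -> le e g.
Proof. by rewrite /le => ef fg; rewrite -ef -mulA fg. Qed.

Lemma dom_mul x z : dom (x ** z) = x ** dom z ** inv x.
Proof. by rewrite /dom inv_mul !mulA. Qed.

Lemma dom_mul_le x z : le (dom (x ** z)) (dom x).
Proof. by rewrite /le dom_mul /dom !mulA inv_mul_invr. Qed.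

Definition compat x y := idem (inv x ** y) /\ idem (inv y ** x).

Lemma compat_of_idem_contexts x y :
  (forall z, idem (z ** x) <-> idem (z ** y)) -> compat x y.
Proof.
by move=> ctx; split; [apply/ctx; apply: idem_invmul | apply/ctx; apply: idem_invmul].
Qed.

Lemma compat_agree x y e : compat x y -> le e (dom x) -> le e (dom y) ->
  e ** x = e ** y.
Proof.
move=> [Hk _] ex ey.
have k_sym : inv y ** x = inv x ** y by rewrite -(inv_idem Hk) inv_mul invK.
have e_x : e ** x = e ** y ** (inv x ** y) by rewrite -{1}ey /dom -!mulA k_sym.
have e_y : e ** y = e ** x ** (inv x ** y) by rewrite -{1}ex /dom -!mulA.
by rewrite e_x e_y -mulA Hk -e_y.
Qed.

Lemma compat_dom_eq x y : compat x y -> dom x = dom y -> x = y.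
Proof.
move=> Hc Hd.
have dxx : le (dom x) (dom x) := idem_dom x.
have dxy : le (dom x) (dom y) by rewrite -Hd.
have := compat_agree Hc dxx dxy.
by rewrite {2}Hd /dom !mul_inv_mul.
Qed.

Lemma compat_dom_mul x y z e : compat x y -> idem e ->
  le e (dom x) -> le e (dom (y ** z)) -> le e (dom (x ** z)).
Proof.
move=> Hc He ex eyz.
have ey := le_trans eyz (dom_mul_le y z).
have e_xy : e ** x = e ** y := compat_agree Hc ex ey.
have xe_ye : inv x ** e = inv y ** e.
  by have := congr1 inv e_xy; rewrite !inv_mul (inv_idem He).
rewrite /le (idem_sandwich He (idem_dom _)) dom_mul.
have -> : e ** (x ** dom z ** inv x) ** e = e ** x ** dom z ** (inv x ** e).
  by rewrite !mulA.
rewrite e_xy xe_ye.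
have -> : e ** y ** dom z ** (inv y ** e) = e ** dom (y ** z) ** e.
  by rewrite dom_mul !mulA.
by rewrite -(idem_sandwich He (idem_dom _)).
Qed.

End InverseSemigroup.

Lemma has_elem_pmap (T : eqType) (I : Type) (f : T -> option I) s d x :
  d \in s -> f d = Some x -> has_elem x (pmap f s).
Proof.
elim: s => [|e s IH] //=; rewrite inE => /orP [/eqP <- -> | /IH fx /fx]; first by left.
by case: (f e) => [y|] //= ?; right.
Qed.

Lemma finite_of_descriptions (I : Type) (D : finType) (R : D -> I -> Prop) :
  (forall x, exists d, R d x) -> (forall d x y, R d x -> R d y -> x = y) ->
  finite_carrier I.
Proof.
move=> described R_fun.
pose describe d : option I :=
  if excluded_middle_informative (exists x, R d x) is left ex
  then Some (proj1_sig (constructive_indefinite_description _ ex)) else None.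
exists (pmap describe (enum D)) => x; have [d Rdx] := described x.
apply: (has_elem_pmap (d := d)); first by rewrite mem_enum.
rewrite /describe; case: excluded_middle_informative => [ex | []]; last by exists x.
by case: constructive_indefinite_description => y /= Rdy; rewrite (R_fun _ _ _ Rdy Rdx).
Qed.

Lemma has_elem_index (I : Type) (x : I) s : has_elem x s ->
  exists i : 'I_(size s), tnth (in_tuple s) i = x.
Proof.
move=> sx; suff [i [lt_i_s nth_i]] : exists i, i < size s /\ nth x s i = x.
  by exists (Ordinal lt_i_s); rewrite (tnth_nth x).
elim: s sx => [|y s IH] //= [-> | /IH [i [lt_i_s nth_i]]]; first by exists 0.
by exists i.+1.
Qed.

Lemma code_of_finite (I : Type) : finite_carrier I ->
  exists n (code : I -> 'I_n) (elt : 'I_n -> I), cancel code elt.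
Proof.
case=> s s_full; exists (size s).
pose index x := constructive_indefinite_description _ (has_elem_index (s_full x)).
exists (fun x => proj1_sig (index x)).
exists (tnth (in_tuple s)) => x.
by rewrite /index; case: constructive_indefinite_description.
Qed.

Section Words.
Variables (I : Type) (mul : I -> I -> I).
Hypothesis H : is_inverse_semigroup mul.
Variables (S : eqType) (gen : S -> I).
Local Notation "x ** y" := (mul x y) (at level 40, left associativity).
Local Notation dom := (dom H).

Definition val (x0 : I) (w : seq S) : I := foldl (fun acc b => acc ** gen b) x0 w.

Lemma val_cat x0 p q : val x0 (p ++ q) = val (val x0 p) q.
Proof. exact: foldl_cat. Qed.

Lemma val_rcons x0 p b : val x0 (rcons p b) = val x0 p ** gen b.
Proof. exact: foldl_rcons. Qed.

Lemma val_mull z x0 p : val (z ** x0) p = z ** val x0 p.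
Proof. by elim: p x0 => [|b p IH] x0 //=; rewrite -(mulA H) IH. Qed.

Lemma dom_val_le z s : le mul (dom (val z s)) (dom z).
Proof.
elim/last_ind: s => [|s b IH]; first exact: idem_dom.
by apply: (le_trans H _ IH); rewrite val_rcons; apply: dom_mul_le.
Qed.

Section Trace.
Variables (K : eqType) (key : seq S -> K) (x0 : I).

Fixpoint trace (p w : seq S) : seq (K * S) :=
  if w is b :: w' then (key p, b) :: trace (rcons p b) w' else [::].

Lemma trace_in p q b s : (key (p ++ q), b) \in trace p (q ++ b :: s).
Proof.
elim: q p => [|c q IH] p /=; first by rewrite cats0 mem_head.
by rewrite inE -cat_rcons IH orbT.
Qed.

Lemma trace_out p w t b : (t, b) \in trace p w ->
  exists q s, w = q ++ b :: s /\ t = key (p ++ q).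
Proof.
elim: w p => [|c w IH] p //=; rewrite inE => /orP [/eqP [-> ->]|].
  by exists [::], w; rewrite cats0.
move=> /IH [q [s [-> ->]]]; exists (c :: q), s; split=> //.
by rewrite cat_rcons.
Qed.

Hypothesis key_compat : forall p p', key p = key p' -> compat H (val x0 p) (val x0 p').

(* A word whose trace contains that of w has a smaller domain: induction on the
   prefixes p b of w, matching each with a prefix q b of w' with the same key. *)
Lemma dom_le_of_trace_sub w w' : {subset trace [::] w <= trace [::] w'} ->
  le mul (dom (val x0 w')) (dom (val x0 w)).
Proof.
move=> sub_ww'.
suff dom_le_prefix p s : w = p ++ s -> le mul (dom (val x0 w')) (dom (val x0 p)).
  by apply: (dom_le_prefix w [::]); rewrite cats0.
elim/last_ind: p s => [|p b IH] s def_w; first exact: dom_val_le.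
have /sub_ww' /trace_out [q [s' [def_w' key_pq]]] : (key p, b) \in trace [::] w.
  by rewrite def_w cat_rcons -[p]cat0s trace_in.
rewrite val_rcons; apply: (compat_dom_mul (y := val x0 q)).
- exact: key_compat.
- exact: idem_dom.
- by apply: (IH (b :: s)); rewrite def_w cat_rcons.
- by rewrite def_w' -cat_rcons val_cat -val_rcons; apply: dom_val_le.
Qed.

Lemma val_of_trace w w' : key w = key w' -> trace [::] w =i trace [::] w' ->
  val x0 w = val x0 w'.
Proof.
move=> key_ww' trace_ww'; apply: (compat_dom_eq (key_compat key_ww')).
have le_ww' : le mul (dom (val x0 w')) (dom (val x0 w)).
  by apply: dom_le_of_trace_sub => t; rewrite trace_ww'.
have le_w'w : le mul (dom (val x0 w)) (dom (val x0 w')).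
  by apply: dom_le_of_trace_sub => t; rewrite trace_ww'.
by rewrite -le_w'w (idem_comm H (idem_dom H _) (idem_dom H _)) le_ww'.
Qed.

End Trace.

Lemma val_cons_cat x0 p b q : val x0 (p ++ b :: q) = val x0 p ** val (gen b) q.
Proof. by rewrite val_cat /= val_mull. Qed.

End Words.

(* If I is generated from finitely many starting points x0 a, and each of them
   comes with a key into a finite type such that prefixes with equal keys have
   compatible values, then I is finite: a value is described by its starting
   point, its key and the set of pairs in its trace. *)
Lemma finite_of_compatible_keys (I : Type) (mul : I -> I -> I)
    (H : is_inverse_semigroup mul) (S A K : finType) (gen : S -> I)
    (x0 : A -> I) (key : A -> seq S -> K) :
  (forall x, exists a w, val mul gen (x0 a) w = x) ->
  (forall a p p', key a p = key a p' ->
     compat H (val mul gen (x0 a) p) (val mul gen (x0 a) p')) ->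
  finite_carrier I.
Proof.
move=> generated key_compat.
pose R (d : A * K * {set K * S}) x := exists a w,
  d = (a, key a w, [set t in trace (key a) [::] w]) /\ val mul gen (x0 a) w = x.
apply: (finite_of_descriptions (R := R)).
  by move=> x; have [a [w <-]] := generated x; eexists; exists a, w.
move=> _ x y [a [w [-> <-]]] [a' [w' [[<- key_ww' trace_ww'] <-]]].
apply: (val_of_trace (key_compat a) key_ww') => t.
by move/setP: trace_ww' => /(_ t); rewrite !inE.
Qed.

Definition dec (P : Prop) : bool := if excluded_middle_informative P then true else false.

Lemma decP (P : Prop) : dec P <-> P.
Proof. by rewrite /dec; case: excluded_middle_informative. Qed.

Lemma regular_ext (S : finType) (L L' : seq S -> Prop) :
  (forall w, L w <-> L' w) -> regular L -> regular L'.
Proof.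
move=> LL' [Q [q0 [delta [F accepts]]]]; exists Q, q0, delta, F => w.
by rewrite -LL'.
Qed.

Section Automaton.
Variables (S Q : finType) (q0 : Q) (delta : Q -> S -> Q) (F : pred Q).
Variable L : seq S -> Prop.
Hypothesis accepts : forall w, L w <-> F (foldl delta q0 w).

Definition transition (w : seq S) : {ffun Q -> Q} := [ffun q => foldl delta q w].

Lemma accepts_context l u v r : transition u = transition v ->
  L (l ++ u ++ r) <-> L (l ++ v ++ r).
Proof.
move=> uv; rewrite !accepts !foldl_cat.
by have := congr1 (fun f : {ffun Q -> Q} => f (foldl delta q0 l)) uv; rewrite !ffunE => ->.
Qed.

End Automaton.

Lemma regular_of_finite (I : Type) (mul : I -> I -> I) (S : finType) (gen : S -> I)
    (P0 : Prop) (P : I -> Prop) :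
  finite_carrier I ->
  regular (fun w => if w is a :: w' then P (eval_sg mul gen a w') else P0).
Proof.
case/code_of_finite=> n [code [elt codeK]].
pose delta (st : option 'I_n) b :=
  Some (code (if st is Some i then mul (elt i) (gen b) else gen b)).
pose F (st : option 'I_n) := if st is Some i then dec (P (elt i)) else dec P0.
exists (option 'I_n : finType), None, delta, F.
have run x w : foldl delta (Some (code x)) w = Some (code (val mul gen x w)).
  by elim: w x => [|b w IH] x //=; rewrite /delta codeK IH.
by case=> [|a w]; rewrite /= ?run /F ?codeK decP.
Qed.

Section SemigroupCase.
Variables (I : Type) (mul : I -> I -> I) (S : finType) (gen : S -> I).
Hypothesis H : is_inverse_semigroup mul.
Hypothesis generated : generates_semigroup mul gen.
Variables (Q : finType) (q0 : Q) (delta : Q -> S -> Q) (F : pred Q).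
Hypothesis accepts : forall w, idem_problem_sg mul gen w <-> F (foldl delta q0 w).

Lemma eval_sgE a w : eval_sg mul gen a w = val mul gen (gen a) w.
Proof. by []. Qed.

(* Nonempty words inducing the same transformation have compatible values,
   since every element is the value of a nonempty left context. *)
Lemma sg_transition_compat a p b p' :
  transition delta (a :: p) = transition delta (b :: p') ->
  compat H (val mul gen (gen a) p) (val mul gen (gen b) p').
Proof.
move=> same_tr; apply: compat_of_idem_contexts => z; have [c [r <-]] := generated z.
have := accepts_context accepts (c :: r) [::] same_tr.
by rewrite /= !cats0 !eval_sgE !(val_cons_cat H).
Qed.

End SemigroupCase.

Section MonoidCase.
Variables (I : Type) (mul : I -> I -> I) (one : I) (S : finType) (gen : S -> I).
Hypothesis Hm : is_inverse_monoid mul one.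
Hypothesis generated : generates_monoid mul one gen.
Variables (Q : finType) (q0 : Q) (delta : Q -> S -> Q) (F : pred Q).
Hypothesis accepts : forall w, idem_problem_mon mul one gen w <-> F (foldl delta q0 w).

Lemma eval_monE w : eval_mon mul one gen w = val mul gen one w.
Proof. by []. Qed.

Lemma val_one_cat p q :
  val mul gen one (p ++ q) = mul (val mul gen one p) (val mul gen one q).
Proof.
by rewrite val_cat -{1}[val mul gen one p](proj2 (proj2 Hm _)) (val_mull (proj1 Hm)).
Qed.

Lemma mon_transition_compat p p' : transition delta p = transition delta p' ->
  compat (proj1 Hm) (val mul gen one p) (val mul gen one p').
Proof.
move=> same_tr; apply: compat_of_idem_contexts => z; have [r <-] := generated z.
have := accepts_context accepts r [::] same_tr.
by rewrite /idem_problem_mon !cats0 !eval_monE !val_one_cat.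
Qed.

End MonoidCase.

Theorem mainTheorem1 :
  (forall (I : Type) (mul : I -> I -> I) (S : finType) (gen : S -> I),
     is_inverse_semigroup mul -> generates_semigroup mul gen ->
     (regular (idem_problem_sg mul gen) <-> finite_carrier I)) /\
  (forall (I : Type) (mul : I -> I -> I) (one : I) (S : finType) (gen : S -> I),
     is_inverse_monoid mul one -> generates_monoid mul one gen ->
     (regular (idem_problem_mon mul one gen) <-> finite_carrier I)).
Proof.
split=> [I mul S gen H generated | I mul one S gen Hm generated]; split.
- case=> Q [q0 [delta [F accepts]]].
  apply: (finite_of_compatible_keys (H := H) (gen := gen) (x0 := gen)
    (key := fun a p => transition delta (a :: p))) => //.
  by move=> a p p'; apply: sg_transition_compat.
- exact: regular_of_finite.
- case=> Q [q0 [delta [F accepts]]].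
  pose key (_ : unit) p := transition delta p.
  apply: (finite_of_compatible_keys (H := proj1 Hm) (gen := gen)
    (x0 := fun _ => one) (key := key)).
    by move=> x; have [w <-] := generated x; exists tt, w.
  by move=> [] p p'; apply: mon_transition_compat.
- move=> fin; apply: regular_ext (regular_of_finite mul gen (is_idempotent mul one)
    (is_idempotent mul) fin) => -[|a w] //.
  by rewrite /idem_problem_mon eval_monE /= (proj1 (proj2 Hm _)).
Qed.
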